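(* Let $m\ge1$, $\tau_1\ge\tau_2\ge\dots\ge\tau_m>0$, $b_1,\dots,b_m>0$, and $\psi(u)=\frac12u^2+\sum_{j=1}^mb_j\sqrt{\tau_j-u^2}$. Let $\omega$ be a differentiable function on $(0,\infty)$ with $|\omega^{(j)}(u)|\le a_0u^{-j}$ for $j=0,1$ and all $u>0$. Let $\chi$ be a smooth non-decreasing function on $\mathbb{R}$ with $\chi(\lambda)=0$ for $\lambda\le\frac14$ and $\chi(\lambda)=1$ for $\lambda\ge\frac12$. Then there is a constant $C_0$ depending only on $a_0$ (and $\chi$) such that for every $1\le k\le m$, \[ \Bigl|\int_0^\infty e^{i\psi(u)}\Bigl(1-\chi\Bigl(\frac{u}{\sqrt{\tau_m}}\Bigr)\Bigr)\omega(u)\frac{u}{\sqrt{\tau_k}}\,du\Bigr|\le C_0\min\Bigl(\tau_1^{1/4},\ m^{3/2}b_k^{-1}\max_\ell b_\ell\Bigr). \]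
   Context: The integrand vanishes for $u\ge\frac12\sqrt{\tau_m}$, so only the values of $\psi$ on $[0,\frac12\sqrt{\tau_m}]$ matter. *)

From Stdlib Require Import Reals List.
From Coquelicot Require Import Coquelicot.
Open Scope R_scope.

Definition expi (x : R) : C := (cos x, sin x).

Definition psi (m : nat) (tau b : nat -> R) (u : R) : R :=
  u ^ 2 / 2 + sum_n_m (fun j => b j * sqrt (tau j - u ^ 2)) 1 m.

Definition maxb (m : nat) (b : nat -> R) : R :=
  fold_right Rmax (b 1%nat) (map b (seq 1 m)).

Definition integrand (m k : nat) (tau b : nat -> R) (chi omega : R -> R)
  (u : R) : C :=
  scal ((1 - chi (u / sqrt (tau m))) * omega u * (u / sqrt (tau k)))
       (expi (psi m tau b u)).

(* The cutoff confines the integral to [[0, L]], [L = sqrt tau_m / 2], which gives the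
   trivial bound [a0 sqrt tau_m / 4].  Write [psi' u = u * rate u] with
   [rate u = 1 - sum_j b_j / sqrt (tau_j - u^2)]; [rate] is nonincreasing, with
   [rate' u = - u * rate_decay u].  If [rate_decay >= 2 nu] wherever [|rate| < 1/2], then
   [rate] changes sign at some [u0] and [|rate u| >= min (1/2) (nu |u^2 - u0^2|)].  Where
   [|u^2 - u0^2| >= 1/sqrt nu], integrating by parts against [e^{i psi}] (nonstationary
   phase) costs [O(a0 / sqrt (tau_k nu) + a0 log tau_m / sqrt tau_k)]; the remaining set
   has [u^2]-length [O(1/sqrt nu)] and is bounded trivially.  Two curvature bounds finish:
   [rate_decay >= weight / tau_1 > 1 / (2 tau_1)] gives [tau_1^(1/4)]; and since some
   [b_l / sqrt tau_l >= 1/(4m)] while [b_k <= 3/2 sqrt tau_k], the [l]-th term of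
   [rate_decay] gives [m^(3/2) max b / b_k].  Real and imaginary parts are treated alike,
   with [(g, G) = (cos, sin)] and [(sin, - cos)], [G' = g]. *)

From Stdlib Require Import Reals List Lra Lia.
From Coquelicot Require Import Coquelicot.
Open Scope R_scope.

Lemma Derive_of_is_derive (f : R -> R) (x l : R) :
  is_derive f x l -> Derive (fun y : R => f y) x = l.
Proof. exact (is_derive_unique f x l). Qed.

Lemma ex_derive_of_is_derive (f : R -> R) (x l : R) :
  is_derive f x l -> ex_derive (fun y : R => f y) x.
Proof. intros H; exists l; exact H. Qed.

(* [auto_derive], where every abstract function [f] occurring in the goal is
   differentiated through a hypothesis [is_derive f x l] of the context. *)
Ltac derive_using :=
  auto_derive;
  [ repeat match goal with
    | |- _ /\ _ => split
    | |- True => exact I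
    | H : is_derive ?f ?x _ |- ex_derive _ ?y => unify x y; exact (ex_derive_of_is_derive f y _ H)
    end ..
  | repeat match goal with
    | H : is_derive ?f ?x ?l |- context [Derive _ ?y] =>
        unify x y; rewrite (Derive_of_is_derive f y l H)
    end; match goal with |- ?a = ?b => change (@eq R a b) end ].

Lemma nondecreasing_of_is_derive (h dh : R -> R) (a b : R) :
  a <= b ->
  (forall x, a <= x <= b -> is_derive h x (dh x)) ->
  (forall x, a <= x <= b -> 0 <= dh x) -> h a <= h b.
Proof.
  intros Hab Hd Hpos.
  destruct (MVT_gen h a b dh) as [c [Hc Heq]];
    rewrite ?Rmin_left, ?Rmax_right in * by lra.
  - intros x Hx. apply Hd; lra.
  - intros x Hx. apply derivable_continuous_pt. exists (dh x).
    apply is_derive_Reals, Hd; lra.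
  - assert (0 <= dh c * (b - a)) by (apply Rmult_le_pos; [apply Hpos|]; lra).
    lra.
Qed.

(* Both [RInt p a v - Q v + E v] and [Q v + E v - RInt p a v] are nondecreasing. *)
Lemma abs_RInt_le_by_parts (p Q E dQ dE : R -> R) (c e a b : R) :
  c < a -> a <= b -> b < e ->
  (forall u, c < u < e -> continuous p u) ->
  (forall u, a <= u <= b -> is_derive Q u (dQ u)) ->
  (forall u, a <= u <= b -> is_derive E u (dE u)) ->
  (forall u, a <= u <= b -> Rabs (dQ u - p u) <= dE u) ->
  ex_RInt p a b /\ Rabs (RInt p a b) <= Rabs (Q a) + Rabs (Q b) + (E b - E a).
Proof.
  intros Hca Hab Hbe Hc HQ HE Hb.
  assert (Hex : forall v, c < v < e -> ex_RInt p a v).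
  { intros v Hv. apply (@ex_RInt_continuous R_CompleteNormedModule).
    intros z Hz. apply Hc. split.
    - apply Rlt_le_trans with (Rmin a v); [apply Rmin_case; lra | apply Hz].
    - apply Rle_lt_trans with (Rmax a v); [apply Hz | apply Rmax_case; lra]. }
  set (F := fun v => RInt p a v).
  assert (HP : forall u, a <= u <= b -> is_derive F u (p u)).
  { intros u Hu. apply is_derive_RInt with a; [| apply Hc; lra].
    assert (Hd : 0 < Rmin (u - c) (e - u)) by (apply Rmin_case; lra).
    exists (mkposreal _ Hd). intros v Hv. apply RInt_correct, Hex.
    apply Rabs_lt_between' in Hv. pose proof (Rmin_l (u - c) (e - u)).
    pose proof (Rmin_r (u - c) (e - u)). simpl in *. lra. }
  split; [apply Hex; lra |].
  assert (Hup : F a - Q a + E a <= F b - Q b + E b).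
  { clearbody F.
    apply (nondecreasing_of_is_derive (fun v => F v - Q v + E v)
             (fun u => p u - dQ u + dE u)); [lra | |].
    - intros x Hx. specialize (HP x Hx). specialize (HQ x Hx). specialize (HE x Hx).
      derive_using. ring.
    - intros x Hx. specialize (Hb x Hx). apply Rabs_le_between in Hb. lra. }
  assert (Hlow : - (F a - Q a - E a) <= - (F b - Q b - E b)).
  { clearbody F.
    apply (nondecreasing_of_is_derive (fun v => - (F v - Q v - E v))
             (fun u => - (p u - dQ u - dE u))); [lra | |].
    - intros x Hx. specialize (HP x Hx). specialize (HQ x Hx). specialize (HE x Hx).
      derive_using. ring.
    - intros x Hx. specialize (Hb x Hx). apply Rabs_le_between in Hb. lra. }
  unfold F in *. rewrite RInt_point in Hup, Hlow. unfold zero in Hup, Hlow; simpl in Hup, Hlow.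
  pose proof (Rle_abs (Q a)). pose proof (Rle_abs (Q b)).
  pose proof (Rle_abs (- Q a)). pose proof (Rle_abs (- Q b)).
  rewrite Rabs_Ropp in *. apply Rabs_le. split; lra.
Qed.

Lemma sum_n_m_le_loc (h g : nat -> R) (n p : nat) :
  (forall j, (n <= j <= p)%nat -> h j <= g j) -> sum_n_m h n p <= sum_n_m g n p.
Proof.
  induction p as [|p IH]; intros H.
  - destruct n as [|n].
    + rewrite !sum_n_n. apply H; lia.
    + rewrite !sum_n_m_zero by lia. apply Rle_refl.
  - destruct (Compare_dec.le_lt_dec n (S p)) as [Hn|Hn].
    + rewrite !sum_n_Sm by lia. apply Rplus_le_compat; [apply IH; intros|]; apply H; lia.
    + rewrite !sum_n_m_zero by lia. apply Rle_refl.
Qed.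

Lemma sum_n_m_nonneg_loc (h : nat -> R) (n p : nat) :
  (forall j, (n <= j <= p)%nat -> 0 <= h j) -> 0 <= sum_n_m h n p.
Proof.
  intros H. rewrite <- (Rmult_0_r (INR (S p - n))), <- sum_n_m_const.
  apply sum_n_m_le_loc, H.
Qed.

Lemma sum_n_m_term_le (h : nat -> R) (n p l : nat) :
  (forall j, (n <= j <= p)%nat -> 0 <= h j) -> (n <= l <= p)%nat -> h l <= sum_n_m h n p.
Proof.
  induction p as [|p IH]; intros H Hl.
  - replace l with 0%nat by lia. replace n with 0%nat by lia. rewrite sum_n_n. apply Rle_refl.
  - rewrite sum_n_Sm by lia. change plus with Rplus.
    destruct (Nat.eq_dec l (S p)) as [->|Hne].
    + assert (0 <= sum_n_m h n p) by (apply sum_n_m_nonneg_loc; intros; apply H; lia). lra.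
    + assert (h l <= sum_n_m h n p) by (apply IH; [intros; apply H |]; lia).
      assert (0 <= h (S p)) by (apply H; lia). lra.
Qed.

Lemma sum_n_m_le_max_term (h : nat -> R) (n : nat) :
  (1 <= n)%nat -> exists l, (1 <= l <= n)%nat /\ sum_n_m h 1 n <= INR n * h l.
Proof.
  induction n as [|n IH]; intros Hn; [lia |].
  destruct (Nat.eq_dec n 0) as [->|Hn0].
  { exists 1%nat. rewrite sum_n_n. simpl. split; [lia | lra]. }
  destruct IH as (l & Hl & Hsum); [lia |].
  rewrite sum_n_Sm, S_INR by lia. change plus with Rplus.
  assert (0 <= INR n) by apply pos_INR.
  destruct (Rle_lt_dec (h l) (h (S n))) as [Hle|Hlt].
  - exists (S n). split; [lia |].
    assert (INR n * h l <= INR n * h (S n)) by (apply Rmult_le_compat_l; lra). lra.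
  - exists l. split; [lia |].
    assert (h (S n) <= h l) by lra. lra.
Qed.

Lemma ln_le_ln (x y : R) : 0 < x -> x <= y -> ln x <= ln y.
Proof. intros Hx Hxy. destruct (Req_dec x y) as [->|]; [lra | apply Rlt_le, ln_increasing; lra]. Qed.

Lemma ln_le_twice_sqrt (x : R) : 0 < x -> ln x <= 2 * sqrt x.
Proof.
  intros Hx. assert (Hs : 0 < sqrt x) by (apply sqrt_lt_R0, Hx).
  rewrite <- (sqrt_sqrt x) at 1 by lra. rewrite ln_mult by lra.
  pose proof (exp_ineq1_le (ln (sqrt x))) as Hexp. rewrite exp_ln in Hexp by lra. lra.
Qed.

Lemma Rpower_quarter_sq (x : R) : 0 < x -> Rpower x (1 / 4) ^ 2 = sqrt x.
Proof.
  intros Hx. rewrite <- Rpower_pow by apply exp_pos. rewrite Rpower_mult.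
  replace (1 / 4 * INR 2) with (/ 2) by (simpl; field). apply Rpower_sqrt, Hx.
Qed.

Lemma Rpower_three_halves (x : R) : 0 < x -> Rpower x (3 / 2) = x * sqrt x.
Proof.
  intros Hx. replace (3 / 2) with (1 + / 2) by field.
  rewrite Rpower_plus, Rpower_1, Rpower_sqrt; lra.
Qed.

Lemma Rmin_cases (x y : R) : (x <= y /\ Rmin x y = x) \/ (y <= x /\ Rmin x y = y).
Proof. unfold Rmin. destruct (Rle_dec x y); [left | right]; split; auto; lra. Qed.

Lemma Rmax_cases (x y : R) : (x <= y /\ Rmax x y = y) \/ (y <= x /\ Rmax x y = x).
Proof. unfold Rmax. destruct (Rle_dec x y); [left | right]; split; auto; lra. Qed.

Lemma Rinv_sub_le (x y l : R) :
  0 < l -> (l <= x /\ l <= y) \/ (x <= - l /\ y <= - l) -> / y - / x <= / l.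
Proof.
  intros Hl [[Hx Hy]|[Hx Hy]].
  - assert (/ y <= / l) by (apply Rinv_le_contravar; lra).
    assert (0 < / x) by (apply Rinv_0_lt_compat; lra). lra.
  - assert (/ y < 0) by (apply Rinv_lt_0_compat; lra).
    assert (/ - x <= / l) by (apply Rinv_le_contravar; lra).
    rewrite Rinv_opp in *. lra.
Qed.

Lemma is_derive_sum_n_m (h dh : nat -> R -> R) (n p : nat) (x : R) :
  (forall j, (n <= j <= p)%nat -> is_derive (h j) x (dh j x)) ->
  is_derive (fun y => sum_n_m (fun j => h j y) n p) x (sum_n_m (fun j => dh j x) n p).
Proof.
  induction p as [|p IH]; intros H.
  - destruct n as [|n].
    + apply (is_derive_ext (h 0%nat)); [intros; now rewrite sum_n_n |].
      rewrite sum_n_n. apply H; lia.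
    + apply (is_derive_ext (fun _ => 0)); [intros; now rewrite sum_n_m_zero by lia |].
      rewrite sum_n_m_zero by lia. apply (is_derive_const 0).
  - destruct (Compare_dec.le_lt_dec n (S p)) as [Hn|Hn].
    + apply (is_derive_ext (fun y => plus (sum_n_m (fun j => h j y) n p) (h (S p) y)));
        [intros; now rewrite sum_n_Sm by lia |].
      rewrite sum_n_Sm by lia.
      apply (is_derive_plus (fun y => sum_n_m (fun j => h j y) n p) (h (S p)));
        [apply IH; intros |]; apply H; lia.
    + apply (is_derive_ext (fun _ => 0)); [intros; now rewrite sum_n_m_zero by lia |].
      rewrite sum_n_m_zero by lia. apply (is_derive_const 0).
Qed.

Lemma le_maxb (m : nat) (b : nat -> R) (j : nat) : (1 <= j <= m)%nat -> b j <= maxb m b.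
Proof.
  intros Hj. unfold maxb.
  assert (Hin : In (b j) (map b (seq 1 m))) by (apply in_map, in_seq; lia).
  generalize (b 1%nat). induction (map b (seq 1 m)) as [|x l IH]; intros d; [destruct Hin |].
  destruct Hin as [<-|Hin]; simpl; [apply Rmax_l |].
  eapply Rle_trans; [apply IH; auto | apply Rmax_r].
Qed.

Lemma is_derive_sqrt_sub_sq (t u : R) :
  u ^ 2 < t -> is_derive (fun y => sqrt (t - y ^ 2)) u (- u / sqrt (t - u ^ 2)).
Proof.
  intros H. assert (0 < sqrt (t - u ^ 2)) by (apply sqrt_lt_R0; lra).
  (* the normal form [auto_derive] gives to [t - u ^ 2] *)
  replace (t - u ^ 2) with (t + - (u * (u * 1))) in * by ring.
  auto_derive; [lra |]. field. lra.
Qed.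

Lemma is_derive_inv_sqrt_sub_sq (t u : R) :
  u ^ 2 < t -> is_derive (fun y => / sqrt (t - y ^ 2)) u (u / ((t - u ^ 2) * sqrt (t - u ^ 2))).
Proof.
  intros H. assert (0 < sqrt (t - u ^ 2)) by (apply sqrt_lt_R0; lra).
  replace (t - u ^ 2) with (t + - (u * (u * 1))) in * by ring.
  auto_derive; [repeat split; lra |]. rewrite sqrt_sqrt by lra. field. lra.
Qed.

(** * The phase *)

Definition weight (m : nat) (tau b : nat -> R) (u : R) : R :=
  sum_n_m (fun j => b j / sqrt (tau j - u ^ 2)) 1 m.

Definition rate (m : nat) (tau b : nat -> R) (u : R) : R := 1 - weight m tau b u.

Definition rate_decay (m : nat) (tau b : nat -> R) (u : R) : R :=
  sum_n_m (fun j => b j / ((tau j - u ^ 2) * sqrt (tau j - u ^ 2))) 1 m.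

Section Phase.

Variables (m : nat) (tau b : nat -> R).
Hypothesis m_pos : (1 <= m)%nat.
Hypothesis tau_nonincreasing : forall j, (1 <= j)%nat -> (j < m)%nat -> tau (S j) <= tau j.
Hypothesis tau_m_pos : 0 < tau m.
Hypothesis b_pos : forall j, (1 <= j <= m)%nat -> 0 < b j.

Lemma tau_antitone (i j : nat) : (1 <= i <= j)%nat -> (j <= m)%nat -> tau j <= tau i.
Proof.
  induction j as [|j IH]; intros Hij Hjm; [lia |].
  destruct (Nat.eq_dec i (S j)) as [->|Hne]; [apply Rle_refl |].
  eapply Rle_trans; [apply tau_nonincreasing | apply IH]; lia.
Qed.

Lemma tau_between (j : nat) : (1 <= j <= m)%nat -> tau m <= tau j <= tau 1%nat.
Proof. intros Hj. split; apply tau_antitone; lia. Qed.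

Lemma sq_lt_tau (u : R) (j : nat) :
  0 <= u < sqrt (tau m) -> (1 <= j <= m)%nat -> u ^ 2 < tau j.
Proof.
  intros Hu Hj. destruct (tau_between j Hj).
  pose proof (sqrt_sqrt (tau m) (Rlt_le _ _ tau_m_pos)). nra.
Qed.

Lemma tau_sub_sq_ge (u : R) (j : nat) :
  0 <= u <= sqrt (tau m) / 2 -> (1 <= j <= m)%nat -> 3 / 4 * tau j <= tau j - u ^ 2.
Proof.
  intros Hu Hj. destruct (tau_between j Hj).
  pose proof (sqrt_sqrt (tau m) (Rlt_le _ _ tau_m_pos)). nra.
Qed.

Lemma is_derive_psi (u : R) :
  0 <= u < sqrt (tau m) -> is_derive (psi m tau b) u (u * rate m tau b u).
Proof.
  intros Hu.
  assert (Hs : is_derive (fun y => sum_n_m (fun j => b j * sqrt (tau j - y ^ 2)) 1 m) u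
                 (sum_n_m (fun j => b j * (- u / sqrt (tau j - u ^ 2))) 1 m)).
  { apply (is_derive_sum_n_m (fun j y => b j * sqrt (tau j - y ^ 2))
                              (fun j y => b j * (- y / sqrt (tau j - y ^ 2)))).
    intros j Hj. exact (is_derive_scal _ u (b j) _
                          (is_derive_sqrt_sub_sq _ u (sq_lt_tau u j Hu Hj))). }
  assert (Hq : is_derive (fun y : R => y ^ 2 / 2) u u) by (auto_derive; [exact I | field]).
  unfold rate, weight.
  replace (u * _) with (u + sum_n_m (fun j => b j * (- u / sqrt (tau j - u ^ 2))) 1 m).
  - exact (is_derive_plus _ _ u _ _ Hq Hs).
  - rewrite Rmult_minus_distr_l, Rmult_1_r. unfold Rminus.
    rewrite Ropp_mult_distr_l, <- (sum_n_m_mult_l (- u)).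
    erewrite sum_n_m_ext; [reflexivity |]. intros j. unfold mult; simpl. unfold Rdiv. ring.
Qed.

Lemma is_derive_rate (u : R) :
  0 <= u < sqrt (tau m) -> is_derive (rate m tau b) u (- u * rate_decay m tau b u).
Proof.
  intros Hu.
  assert (Hs : is_derive (weight m tau b) u
     (sum_n_m (fun j => b j * (u / ((tau j - u ^ 2) * sqrt (tau j - u ^ 2)))) 1 m)).
  { apply (is_derive_sum_n_m (fun j y => b j * / sqrt (tau j - y ^ 2))
      (fun j y => b j * (y / ((tau j - y ^ 2) * sqrt (tau j - y ^ 2))))).
    intros j Hj. exact (is_derive_scal _ u (b j) _
                          (is_derive_inv_sqrt_sub_sq _ u (sq_lt_tau u j Hu Hj))). }
  replace (sum_n_m _ 1 m) with (u * rate_decay m tau b u) in Hs.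
  - unfold rate. derive_using. ring.
  - unfold rate_decay. rewrite <- (sum_n_m_mult_l u).
    apply sum_n_m_ext. intros j. unfold mult; simpl. unfold Rdiv. ring.
Qed.

Lemma rate_decay_nonneg (u : R) : 0 <= u < sqrt (tau m) -> 0 <= rate_decay m tau b u.
Proof.
  intros Hu. apply sum_n_m_nonneg_loc. intros j Hj.
  pose proof (sq_lt_tau u j Hu Hj). pose proof (b_pos j Hj).
  assert (0 < sqrt (tau j - u ^ 2)) by (apply sqrt_lt_R0; lra).
  apply Rlt_le, Rdiv_lt_0_compat; [lra | apply Rmult_lt_0_compat; lra].
Qed.

Lemma rate_nonincreasing (u w : R) :
  0 <= u <= w -> w < sqrt (tau m) -> rate m tau b w <= rate m tau b u.
Proof.
  intros Hu Hw. apply Ropp_le_cancel.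
  apply (nondecreasing_of_is_derive (fun v => - rate m tau b v)
           (fun v => v * rate_decay m tau b v)); [lra | |].
  - intros x Hx. pose proof (is_derive_rate x ltac:(lra)). derive_using. ring.
  - intros x Hx. pose proof (rate_decay_nonneg x ltac:(lra)). nra.
Qed.

Section Curvature.

Variable nu : R.
Hypothesis rate_decay_ge : forall v, 0 <= v <= sqrt (tau m) / 2 ->
  Rabs (rate m tau b v) < 1 / 2 -> 2 * nu <= rate_decay m tau b v.

(* [rate + nu * u^2] is nonincreasing wherever [|rate| < 1/2]. *)
Lemma rate_gap (u w : R) :
  0 <= u <= w -> w <= sqrt (tau m) / 2 ->
  Rabs (rate m tau b u) < 1 / 2 -> Rabs (rate m tau b w) < 1 / 2 ->
  nu * (w ^ 2 - u ^ 2) <= rate m tau b u - rate m tau b w.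
Proof.
  intros Huw Hw Hu1 Hw1. pose proof (sqrt_lt_R0 _ tau_m_pos).
  assert (Hincr : - rate m tau b u - nu * u ^ 2 <= - rate m tau b w - nu * w ^ 2).
  { apply (nondecreasing_of_is_derive (fun v => - rate m tau b v - nu * v ^ 2)
             (fun v => v * rate_decay m tau b v - nu * (2 * v))); [lra | |].
    - intros x Hx. pose proof (is_derive_rate x ltac:(lra)). derive_using. ring.
    - intros x Hx.
      assert (rate m tau b w <= rate m tau b x) by (apply rate_nonincreasing; lra).
      assert (rate m tau b x <= rate m tau b u) by (apply rate_nonincreasing; lra).
      apply Rabs_lt_between in Hu1. apply Rabs_lt_between in Hw1.
      assert (2 * nu <= rate_decay m tau b x) by (apply rate_decay_ge; [| apply Rabs_lt_between]; lra).
      nra. }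
  lra.
Qed.

Lemma rate_crossing :
  exists u0, 0 <= u0 <= sqrt (tau m) / 2 /\
  (forall u, 0 <= u <= sqrt (tau m) / 2 ->
     Rmin (1 / 2) (nu * Rabs (u ^ 2 - u0 ^ 2)) <= Rabs (rate m tau b u)) /\
  (forall u, 0 <= u < u0 -> 0 <= rate m tau b u) /\
  (forall u, u0 < u <= sqrt (tau m) / 2 -> rate m tau b u <= 0).
Proof.
  pose proof (sqrt_lt_R0 _ tau_m_pos) as HsT. set (L := sqrt (tau m) / 2) in *.
  assert (HL0 : 0 < L) by (unfold L; lra).
  assert (Hdecr : forall u w, 0 <= u <= w -> w <= L -> rate m tau b w <= rate m tau b u)
    by (intros; apply rate_nonincreasing; unfold L in *; lra).
  assert (Hcross : forall u0, 0 <= u0 <= L ->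
            (0 < u0 -> 0 <= rate m tau b u0) -> (u0 < L -> rate m tau b u0 <= 0) ->
     exists u0, 0 <= u0 <= L /\
     (forall u, 0 <= u <= L -> Rmin (1 / 2) (nu * Rabs (u ^ 2 - u0 ^ 2)) <= Rabs (rate m tau b u)) /\
     (forall u, 0 <= u < u0 -> 0 <= rate m tau b u) /\
     (forall u, u0 < u <= L -> rate m tau b u <= 0)).
  { intros u0 Hu0 Hleft Hright. exists u0. split; [exact Hu0 | split; [| split]].
    - intros u Hu. destruct (Rlt_dec (Rabs (rate m tau b u)) (1 / 2)) as [Hs|Hs];
        [| eapply Rle_trans; [apply Rmin_l | lra]].
      eapply Rle_trans; [apply Rmin_r |]. apply Rabs_lt_between in Hs.
      destruct (Rtotal_order u u0) as [Hlt|[<-|Hgt]].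
      + assert (0 <= rate m tau b u0) by (apply Hleft; lra).
        assert (rate m tau b u0 <= rate m tau b u) by (apply Hdecr; lra).
        assert (nu * (u0 ^ 2 - u ^ 2) <= rate m tau b u - rate m tau b u0)
          by (apply rate_gap; unfold L in *; try apply Rabs_lt_between; lra).
        rewrite Rabs_left1, Rabs_right by nra. lra.
      + rewrite Rminus_diag, Rabs_R0, Rmult_0_r. apply Rabs_pos.
      + assert (rate m tau b u0 <= 0) by (apply Hright; lra).
        assert (rate m tau b u <= rate m tau b u0) by (apply Hdecr; lra).
        assert (nu * (u ^ 2 - u0 ^ 2) <= rate m tau b u0 - rate m tau b u)
          by (apply rate_gap; unfold L in *; try apply Rabs_lt_between; lra).
        rewrite Rabs_right, Rabs_left1 by nra. lra.
    - intros u Hu. assert (rate m tau b u0 <= rate m tau b u) by (apply Hdecr; lra).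
      specialize (Hleft ltac:(lra)). lra.
    - intros u Hu. assert (rate m tau b u <= rate m tau b u0) by (apply Hdecr; lra).
      specialize (Hright ltac:(lra)). lra. }
  destruct (Rle_dec 0 (rate m tau b L)) as [HL|HL]; [apply (Hcross L); intros; lra |].
  destruct (Rle_dec (rate m tau b 0) 0) as [H0|H0]; [apply (Hcross 0); intros; lra |].
  destruct (Ranalysis5.IVT_interv (fun v => - rate m tau b v) 0 L) as [z [Hz Hz0]];
    [| lra | lra | lra | apply (Hcross z); intros; lra].
  - intros x Hx. apply derivable_continuous_pt.
    exists (- (- x * rate_decay m tau b x)). apply is_derive_Reals.
    pose proof (is_derive_rate x ltac:(unfold L in *; lra)). derive_using. ring.
Qed.

End Curvature.

Lemma rate_decay_ge_weight (v : R) :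
  0 <= v <= sqrt (tau m) / 2 -> weight m tau b v / tau 1%nat <= rate_decay m tau b v.
Proof.
  intros Hv. pose proof (sqrt_lt_R0 _ tau_m_pos).
  unfold weight, rate_decay, Rdiv at 1. rewrite Rmult_comm, <- (sum_n_m_mult_l (/ tau 1%nat)).
  apply sum_n_m_le_loc. intros j Hj. change mult with Rmult.
  pose proof (tau_sub_sq_ge v j Hv Hj). pose proof (tau_between j Hj). pose proof (b_pos j Hj).
  assert (0 < sqrt (tau j - v ^ 2)) by (apply sqrt_lt_R0; lra).
  replace (/ tau 1%nat * (b j / sqrt (tau j - v ^ 2)))
    with (b j / sqrt (tau j - v ^ 2) * / tau 1%nat) by ring.
  replace (b j / ((tau j - v ^ 2) * sqrt (tau j - v ^ 2)))
    with (b j / sqrt (tau j - v ^ 2) * / (tau j - v ^ 2)) by (field; lra).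
  apply Rmult_le_compat_l; [apply Rlt_le, Rdiv_lt_0_compat; lra |].
  pose proof (pow2_ge_0 v). apply Rinv_le_contravar; lra.
Qed.

Lemma weight_le (v : R) :
  0 <= v <= sqrt (tau m) / 2 -> weight m tau b v <= 2 * sum_n_m (fun j => b j / sqrt (tau j)) 1 m.
Proof.
  intros Hv. unfold weight. rewrite <- (sum_n_m_mult_l 2). apply sum_n_m_le_loc.
  intros j Hj. change mult with Rmult.
  pose proof (tau_sub_sq_ge v j Hv Hj). pose proof (tau_between j Hj). pose proof (b_pos j Hj).
  assert (Ht : 0 < sqrt (tau j)) by (apply sqrt_lt_R0; lra).
  assert (Hs : 0 < sqrt (tau j - v ^ 2)) by (apply sqrt_lt_R0; lra).
  pose proof (sqrt_sqrt (tau j) ltac:(lra)). pose proof (sqrt_sqrt (tau j - v ^ 2) ltac:(lra)).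
  assert (sqrt (tau j) / 2 <= sqrt (tau j - v ^ 2)) by nra.
  replace (2 * (b j / sqrt (tau j))) with (b j / (sqrt (tau j) / 2)) by (field; lra).
  apply Rmult_le_compat_l; [lra |]. apply Rinv_le_contravar; lra.
Qed.

Lemma weight_ge_term (v : R) (k : nat) :
  0 <= v <= sqrt (tau m) / 2 -> (1 <= k <= m)%nat -> b k / sqrt (tau k) <= weight m tau b v.
Proof.
  intros Hv Hk. unfold weight.
  eapply Rle_trans; [| apply (sum_n_m_term_le (fun j => b j / sqrt (tau j - v ^ 2)) 1 m k)]; auto.
  - pose proof (tau_sub_sq_ge v k Hv Hk). pose proof (tau_between k Hk). pose proof (b_pos k Hk).
    assert (0 < sqrt (tau k - v ^ 2)) by (apply sqrt_lt_R0; lra).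
    apply Rmult_le_compat_l; [lra |]. apply Rinv_le_contravar; [lra |].
    apply sqrt_le_1_alt. nra.
  - intros j Hj. pose proof (tau_sub_sq_ge v j Hv Hj). pose proof (tau_between j Hj).
    pose proof (b_pos j Hj). assert (0 < sqrt (tau j - v ^ 2)) by (apply sqrt_lt_R0; lra).
    apply Rlt_le, Rdiv_lt_0_compat; lra.
Qed.

Lemma rate_decay_ge_term (v : R) (l : nat) :
  0 <= v <= sqrt (tau m) / 2 -> (1 <= l <= m)%nat ->
  b l / (tau l * sqrt (tau l)) <= rate_decay m tau b v.
Proof.
  intros Hv Hl. unfold rate_decay.
  eapply Rle_trans;
    [| apply (sum_n_m_term_le (fun j => b j / ((tau j - v ^ 2) * sqrt (tau j - v ^ 2))) 1 m l)]; auto.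
  - pose proof (tau_sub_sq_ge v l Hv Hl). pose proof (tau_between l Hl). pose proof (b_pos l Hl).
    assert (0 < sqrt (tau l - v ^ 2)) by (apply sqrt_lt_R0; lra).
    assert (sqrt (tau l - v ^ 2) <= sqrt (tau l)) by (apply sqrt_le_1_alt; nra).
    apply Rmult_le_compat_l; [lra |]. apply Rinv_le_contravar; [apply Rmult_lt_0_compat; lra |].
    apply Rmult_le_compat; nra.
  - intros j Hj. pose proof (tau_sub_sq_ge v j Hv Hj). pose proof (tau_between j Hj).
    pose proof (b_pos j Hj). assert (0 < sqrt (tau j - v ^ 2)) by (apply sqrt_lt_R0; lra).
    apply Rlt_le, Rdiv_lt_0_compat; [lra | apply Rmult_lt_0_compat; lra].
Qed.

Lemma rate_decay_ge_tau1 (v : R) :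
  0 <= v <= sqrt (tau m) / 2 -> Rabs (rate m tau b v) < 1 / 2 ->
  2 * / (4 * tau 1%nat) <= rate_decay m tau b v.
Proof.
  intros Hv Hr. apply Rabs_lt_between in Hr. unfold rate in Hr.
  pose proof (tau_between m ltac:(lia)).
  eapply Rle_trans; [| apply (rate_decay_ge_weight v Hv)].
  replace (2 * / (4 * tau 1%nat)) with (/ 2 / tau 1%nat) by (field; lra).
  apply Rmult_le_compat_r; [apply Rlt_le, Rinv_0_lt_compat |]; lra.
Qed.

(* [|rate v| < 1/2] forces [b_k <= 3/2 sqrt tau_k] and some [b_l / sqrt tau_l >= 1 / (4 m)];
   the term [l] of [rate_decay] then gives the bound. *)
Lemma rate_decay_ge_weights (k : nat) (v : R) :
  (1 <= k <= m)%nat -> 0 <= v <= sqrt (tau m) / 2 -> Rabs (rate m tau b v) < 1 / 2 ->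
  b k ^ 2 / (144 * tau k * INR m ^ 3 * maxb m b ^ 2) <= rate_decay m tau b v.
Proof.
  intros Hk Hv Hr. apply Rabs_lt_between in Hr. unfold rate in Hr.
  pose proof (weight_ge_term v k Hv Hk) as Hwk. pose proof (weight_le v Hv) as Hws.
  destruct (sum_n_m_le_max_term (fun j => b j / sqrt (tau j)) m) as (l & Hl & Hmax); [lia |].
  pose proof (rate_decay_ge_term v l Hv Hl) as HDl.
  pose proof (tau_between k Hk). pose proof (tau_between l Hl).
  pose proof (b_pos k Hk). pose proof (b_pos l Hl). pose proof (le_maxb m b l Hl).
  assert (Hm : 1 <= INR m) by (apply (le_INR 1); lia).
  set (B := maxb m b) in *.
  assert (Hsk : 0 < sqrt (tau k)) by (apply sqrt_lt_R0; lra).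
  assert (Hsl : 0 < sqrt (tau l)) by (apply sqrt_lt_R0; lra).
  pose proof (sqrt_sqrt (tau k) ltac:(lra)). pose proof (sqrt_sqrt (tau l) ltac:(lra)).
  assert (Hbk : b k ^ 2 <= 9 / 4 * tau k).
  { assert (b k <= 3 / 2 * sqrt (tau k)).
    { replace (b k) with (b k / sqrt (tau k) * sqrt (tau k)) by (field; lra). nra. }
    nra. }
  set (z := b l / sqrt (tau l)) in *.
  assert (Hz : 1 / (4 * INR m) <= z).
  { apply (Rmult_le_reg_l (4 * INR m)); [lra |].
    replace (4 * INR m * (1 / (4 * INR m))) with 1 by (field; lra). lra. }
  assert (Hdl : b l / (tau l * sqrt (tau l)) = z ^ 3 / b l ^ 2).
  { unfold z. replace (tau l) with (sqrt (tau l) * sqrt (tau l)) at 1 by lra. field. lra. }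
  rewrite Hdl in HDl. eapply Rle_trans; [| exact HDl].
  apply Rle_trans with ((1 / (4 * INR m)) ^ 3 / B ^ 2).
  - replace ((1 / (4 * INR m)) ^ 3 / B ^ 2) with (9 / 4 * tau k / (144 * tau k * INR m ^ 3 * B ^ 2))
      by (field; lra).
    apply Rmult_le_compat_r; [| exact Hbk].
    apply Rlt_le, Rinv_0_lt_compat. pose proof (pow_lt (INR m) 3 ltac:(lra)).
    assert (0 < B ^ 2) by (apply pow_lt; lra). repeat apply Rmult_lt_0_compat; lra.
  - apply Rmult_le_compat.
    + apply pow_le. apply Rlt_le, Rdiv_lt_0_compat; lra.
    + apply Rlt_le, Rinv_0_lt_compat, pow_lt; lra.
    + apply pow_incr. split; [apply Rlt_le, Rdiv_lt_0_compat |]; lra.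
    + apply Rinv_le_contravar; [apply pow_lt |]; nra.
Qed.

(** * The amplitude and the oscillatory integral *)

Section Amplitude.

Variables (a0 : R) (chi omega : R -> R) (k : nat).
Hypothesis chi_derivable : forall x, ex_derive chi x.
Hypothesis chi_nondecreasing : forall x y, x <= y -> chi x <= chi y.
Hypothesis chi_low : forall l, l <= 1 / 4 -> chi l = 0.
Hypothesis chi_high : forall l, 1 / 2 <= l -> chi l = 1.
Hypothesis omega_derivable : forall u, 0 < u -> ex_derive omega u.
Hypothesis omega_bound : forall u, 0 < u -> Rabs (omega u) <= a0.
Hypothesis Derive_omega_bound : forall u, 0 < u -> Rabs (Derive omega u) <= a0 / u.
Hypothesis k_range : (1 <= k <= m)%nat.

Definition amplitude (u : R) : R := (1 - chi (u / sqrt (tau m))) * omega u / sqrt (tau k).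

Definition amplitude_deriv (u : R) : R :=
  (- (Derive chi (u / sqrt (tau m)) / sqrt (tau m)) * omega u
   + (1 - chi (u / sqrt (tau m))) * Derive omega u) / sqrt (tau k).

Lemma a0_nonneg : 0 <= a0.
Proof. eapply Rle_trans; [apply Rabs_pos | apply (omega_bound 1 Rlt_0_1)]. Qed.

Lemma sqrt_tau_m_bounds : 0 < sqrt (tau m) <= sqrt (tau k).
Proof.
  destruct (tau_between k k_range).
  split; [apply sqrt_lt_R0 | apply sqrt_le_1_alt]; lra.
Qed.

Lemma chi_range (x : R) : 0 <= chi x <= 1.
Proof.
  split.
  - rewrite <- (chi_low (Rmin x (1 / 4))) by apply Rmin_r. apply chi_nondecreasing, Rmin_l.
  - rewrite <- (chi_high (Rmax x (1 / 2))) by apply Rmax_r. apply chi_nondecreasing, Rmax_l.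
Qed.

Lemma Derive_chi_nonneg (x : R) : 0 <= Derive chi x.
Proof.
  set (pr := fun y => exist (fun l => derivable_pt_lim chi y l) (Derive chi y)
     (proj1 (is_derive_Reals _ _ _) (Derive_correct _ _ (chi_derivable y)))).
  exact (nonneg_derivative_0 chi pr chi_nondecreasing x).
Qed.

Lemma is_derive_amplitude (u : R) : 0 < u -> is_derive amplitude u (amplitude_deriv u).
Proof.
  intros Hu. pose proof sqrt_tau_m_bounds.
  pose proof (Derive_correct _ _ (chi_derivable (u / sqrt (tau m)))).
  pose proof (Derive_correct _ _ (omega_derivable u Hu)).
  unfold amplitude, amplitude_deriv. derive_using. unfold Rdiv. field. lra.
Qed.

Lemma abs_amplitude_le (u : R) : 0 < u -> Rabs (amplitude u) <= a0 / sqrt (tau k).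
Proof.
  intros Hu. pose proof sqrt_tau_m_bounds. pose proof (chi_range (u / sqrt (tau m))).
  unfold amplitude, Rdiv. rewrite !Rabs_mult, Rabs_inv, (Rabs_right (sqrt (tau k))) by lra.
  apply Rmult_le_compat_r; [apply Rlt_le, Rinv_0_lt_compat; lra |].
  rewrite <- (Rmult_1_l a0). apply Rmult_le_compat; try apply Rabs_pos.
  - rewrite Rabs_right; lra.
  - apply omega_bound, Hu.
Qed.

Lemma abs_amplitude_deriv_le (u : R) : 0 < u ->
  Rabs (amplitude_deriv u)
  <= a0 / sqrt (tau k) * (/ sqrt (tau m) * Derive chi (u / sqrt (tau m)) + / u).
Proof.
  intros Hu. pose proof sqrt_tau_m_bounds. pose proof a0_nonneg.
  pose proof (chi_range (u / sqrt (tau m))). pose proof (Derive_chi_nonneg (u / sqrt (tau m))).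
  replace (a0 / sqrt (tau k) * (/ sqrt (tau m) * Derive chi (u / sqrt (tau m)) + / u))
    with ((Derive chi (u / sqrt (tau m)) / sqrt (tau m) * a0 + 1 * (a0 / u)) / sqrt (tau k))
    by (field; lra).
  unfold amplitude_deriv, Rdiv at 1 4.
  rewrite Rabs_mult, Rabs_inv, (Rabs_right (sqrt (tau k))) by lra.
  apply Rmult_le_compat_r; [apply Rlt_le, Rinv_0_lt_compat; lra |].
  eapply Rle_trans; [apply Rabs_triang | apply Rplus_le_compat].
  - rewrite Rabs_mult, Rabs_Ropp. apply Rmult_le_compat; try apply Rabs_pos.
    + rewrite Rabs_right; [lra | apply Rle_ge, Rdiv_le_0_compat; lra].
    + apply omega_bound, Hu.
  - rewrite Rabs_mult. apply Rmult_le_compat; try apply Rabs_pos.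
    + rewrite Rabs_right; lra.
    + apply Derive_omega_bound, Hu.
Qed.

Lemma amplitude_eq0 (u : R) : sqrt (tau m) / 2 <= u -> amplitude u = 0.
Proof.
  intros Hu. pose proof sqrt_tau_m_bounds. unfold amplitude.
  rewrite chi_high; [unfold Rdiv; ring |].
  apply (Rmult_le_reg_r (sqrt (tau m))); [lra |].
  replace (u / sqrt (tau m) * sqrt (tau m)) with u by (field; lra). lra.
Qed.

Section Oscillation.

Variables g G : R -> R.
Hypothesis is_derive_G : forall t, is_derive G t (g t).
Hypothesis g_continuous : forall t, continuous g t.
Hypothesis G_bound : forall t, Rabs (G t) <= 1.
Hypothesis g_bound : forall t, Rabs (g t) <= 1.

Definition osc (u : R) : R := amplitude u * u * g (psi m tau b u).

(* [osc] with the values on [u <= 0] replaced by [0]: it is continuous at [0], since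
   [osc u = O(u)] there. *)
Definition osc0 (u : R) : R := if Rle_dec u 0 then 0 else osc u.

Lemma abs_osc_le (u : R) : 0 < u -> Rabs (osc u) <= a0 / sqrt (tau k) * u.
Proof.
  intros Hu. unfold osc. rewrite !Rabs_mult, (Rabs_right u) by lra.
  rewrite <- (Rmult_1_r (a0 / sqrt (tau k) * u)).
  pose proof (abs_amplitude_le u Hu). pose proof (g_bound (psi m tau b u)).
  pose proof (Rabs_pos (amplitude u)). pose proof (Rabs_pos (g (psi m tau b u))).
  apply Rmult_le_compat; [nra | lra | nra | lra].
Qed.

Lemma continuous_osc (u : R) : 0 < u < sqrt (tau m) -> continuous osc u.
Proof.
  intros Hu. unfold osc.
  apply (continuous_mult (fun y => amplitude y * y) (fun y => g (psi m tau b y))).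
  - apply (continuous_mult amplitude (fun y => y)); [| apply continuous_id].
    apply (ex_derive_continuous amplitude).
    exists (amplitude_deriv u). apply is_derive_amplitude; lra.
  - apply (continuous_comp (psi m tau b) g); [| apply g_continuous].
    apply (ex_derive_continuous (psi m tau b)).
    exists (u * rate m tau b u). apply is_derive_psi; lra.
Qed.

Lemma continuous_osc0 (u : R) : 0 <= u < sqrt (tau m) -> continuous osc0 u.
Proof.
  intros Hu. pose proof sqrt_tau_m_bounds. pose proof a0_nonneg.
  set (A := a0 / sqrt (tau k)). assert (0 <= A) by (apply Rdiv_le_0_compat; lra).
  destruct (Req_dec u 0) as [->|Hu0].
  - apply filterlim_locally. intros eps.
    assert (Hd : 0 < eps / (A + 1)) by (apply Rdiv_lt_0_compat; [apply cond_pos | lra]).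
    exists (mkposreal _ Hd). intros y Hy. change R in y. change (Rabs (osc0 y - osc0 0) < eps).
    change (Rabs (y - 0) < eps / (A + 1)) in Hy. rewrite Rminus_0_r in Hy.
    unfold osc0. destruct (Rle_dec 0 0) as [_|]; [| lra]. rewrite Rminus_0_r.
    destruct (Rle_dec y 0); [rewrite Rabs_R0; apply cond_pos |].
    pose proof (abs_osc_le y ltac:(lra)) as Hosc. fold A in Hosc.
    rewrite Rabs_right in Hy by lra.
    apply Rle_lt_trans with ((A + 1) * y); [nra |].
    apply (Rmult_lt_reg_r (/ (A + 1))); [apply Rinv_0_lt_compat; lra |].
    replace ((A + 1) * y * / (A + 1)) with y by (field; lra). exact Hy.
  - apply (continuous_ext_loc _ osc); [| apply continuous_osc; lra].
    assert (Hd : 0 < u) by lra. exists (mkposreal _ Hd). intros y Hy.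
    change (Rabs (y - u) < u) in Hy. apply Rabs_lt_between' in Hy.
    unfold osc0. destruct (Rle_dec y 0); [lra | reflexivity].
Qed.

Lemma RInt_osc0_trivial_bound (c d : R) : 0 <= c <= d -> d < sqrt (tau m) ->
  ex_RInt osc0 c d /\ Rabs (RInt osc0 c d) <= a0 / sqrt (tau k) * (d ^ 2 - c ^ 2).
Proof.
  intros Hcd Hd. pose proof sqrt_tau_m_bounds. pose proof a0_nonneg.
  set (A := a0 / sqrt (tau k)). assert (0 <= A) by (apply Rdiv_le_0_compat; lra).
  assert (Hex : ex_RInt osc0 c d).
  { apply (@ex_RInt_continuous R_CompleteNormedModule). intros z Hz.
    rewrite Rmin_left, Rmax_right in Hz by lra. apply continuous_osc0. lra. }
  split; [exact Hex |].
  eapply Rle_trans; [apply abs_RInt_le_const with (M := A * d); [lra | exact Hex |] |].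
  - intros t Ht. unfold osc0. destruct (Rle_dec t 0).
    + rewrite Rabs_R0. apply Rmult_le_pos; lra.
    + eapply Rle_trans; [apply abs_osc_le; lra |]. apply Rmult_le_compat_l; lra.
  - assert (0 <= A * (d - c) * c) by (apply Rmult_le_pos; [apply Rmult_le_pos |]; lra).
    nra.
Qed.

(* Nonstationary phase: [osc = (amplitude * G(psi) / rate)' - amplitude' * G(psi) / rate
   - amplitude * G(psi) * (1 / rate)'], and the last two terms are integrated in absolute
   value, [W] controlling the [1 / u] part of [amplitude']. *)
Lemma abs_RInt_osc_nonstationary (a c lam : R) (W dW : R -> R) :
  0 < a -> a <= c -> c <= sqrt (tau m) / 2 -> 0 < lam ->
  (forall u, a <= u <= c -> is_derive W u (dW u)) ->
  (forall u, a <= u <= c -> / (u * Rabs (rate m tau b u)) <= dW u) ->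
  (forall u, a <= u <= c -> lam <= rate m tau b u) \/
  (forall u, a <= u <= c -> rate m tau b u <= - lam) ->
  ex_RInt osc a c /\
  Rabs (RInt osc a c) <= a0 / sqrt (tau k) * (4 / lam + (W c - W a)).
Proof.
  intros Ha Hac Hc Hlam HW HdW Hsign.
  pose proof sqrt_tau_m_bounds. pose proof a0_nonneg.
  set (A := a0 / sqrt (tau k)). assert (HA : 0 <= A) by (apply Rdiv_le_0_compat; lra).
  set (P := rate m tau b) in *. set (D := rate_decay m tau b).
  set (h := fun u => chi (u / sqrt (tau m))).
  assert (HP : forall u, a <= u <= c -> lam <= Rabs (P u)).
  { intros u Hu. destruct Hsign as [Hs|Hs]; specialize (Hs u Hu);
      [rewrite Rabs_right | rewrite Rabs_left]; lra. }
  assert (HP0 : forall u, a <= u <= c -> P u <> 0)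
    by (intros u Hu Hz; specialize (HP u Hu); rewrite Hz, Rabs_R0 in HP; lra).
  destruct (abs_RInt_le_by_parts osc
     (fun u => amplitude u * G (psi m tau b u) / P u)
     (fun u => A * (h u / lam + W u + / P u))
     (fun u => (amplitude_deriv u * G (psi m tau b u)
                + amplitude u * (u * P u * g (psi m tau b u))) / P u
               + amplitude u * G (psi m tau b u) * (u * D u / P u ^ 2))
     (fun u => A * (Derive chi (u / sqrt (tau m)) / sqrt (tau m) / lam + dW u
                    + u * D u / P u ^ 2))
     0 (sqrt (tau m)) a c) as [Hex Hbd]; [lra | lra | lra | | | | |].
  - intros u Hu. apply continuous_osc. lra.
  - intros u Hu. specialize (HP0 u Hu).
    pose proof (is_derive_amplitude u ltac:(lra)). pose proof (is_derive_G (psi m tau b u)).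
    pose proof (is_derive_psi u ltac:(lra)) as Hpsi. pose proof (is_derive_rate u ltac:(lra)) as Hr.
    fold P in Hpsi, Hr. fold D in Hr. derive_using; [auto |]. field. auto.
  - intros u Hu. specialize (HP0 u Hu). specialize (HW u Hu).
    pose proof (Derive_correct _ _ (chi_derivable (u / sqrt (tau m)))).
    pose proof (is_derive_rate u ltac:(lra)) as Hr. fold P D in Hr. unfold h.
    derive_using; [auto |]. unfold Rdiv. field. lra.
  - intros u Hu. specialize (HP0 u Hu). specialize (HP u Hu). specialize (HdW u Hu).
    assert (HD : 0 <= D u) by (apply rate_decay_nonneg; lra).
    assert (HP2 : 0 < P u ^ 2) by (apply pow2_gt_0, HP0).
    pose proof (abs_amplitude_deriv_le u ltac:(lra)) as Hdg. fold A in Hdg.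
    pose proof (abs_amplitude_le u ltac:(lra)) as Hg. fold A in Hg.
    pose proof (Derive_chi_nonneg (u / sqrt (tau m))). pose proof (G_bound (psi m tau b u)).
    replace (_ - osc u) with (amplitude_deriv u * G (psi m tau b u) / P u
                              + amplitude u * G (psi m tau b u) * (u * D u / P u ^ 2))
      by (unfold osc; field; auto).
    eapply Rle_trans; [apply Rabs_triang |].
    rewrite Rmult_plus_distr_l. apply Rplus_le_compat.
    + unfold Rdiv at 1. rewrite !Rabs_mult, Rabs_inv.
      apply Rle_trans with (A * (/ sqrt (tau m) * Derive chi (u / sqrt (tau m)) + / u) * / Rabs (P u)).
      * apply Rmult_le_compat_r; [apply Rlt_le, Rinv_0_lt_compat; lra |].
        pose proof (Rabs_pos (amplitude_deriv u)). pose proof (Rabs_pos (G (psi m tau b u))). nra.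
      * rewrite Rmult_assoc. apply Rmult_le_compat_l; [exact HA |].
        rewrite Rmult_plus_distr_r. apply Rplus_le_compat; [| rewrite <- Rinv_mult; exact HdW].
        unfold Rdiv. rewrite (Rmult_comm (Derive chi _)).
        apply Rmult_le_compat_l; [| apply Rinv_le_contravar; lra].
        apply Rmult_le_pos; [apply Rlt_le, Rinv_0_lt_compat |]; lra.
    + assert (0 <= u * D u / P u ^ 2) by (apply Rdiv_le_0_compat; nra).
      rewrite !Rabs_mult, (Rabs_right (u * D u / P u ^ 2)) by lra.
      pose proof (Rabs_pos (amplitude u)). pose proof (Rabs_pos (G (psi m tau b u))).
      apply Rmult_le_compat_r; [lra |]. nra.
  - split; [exact Hex |]. eapply Rle_trans; [exact Hbd |].
    assert (HQ : forall u, a <= u <= c -> Rabs (amplitude u * G (psi m tau b u) / P u) <= A / lam).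
    { intros u Hu. pose proof (abs_amplitude_le u ltac:(lra)) as Hg. fold A in Hg.
      pose proof (G_bound (psi m tau b u)). specialize (HP u Hu).
      unfold Rdiv. rewrite !Rabs_mult, Rabs_inv.
      assert (/ Rabs (P u) <= / lam) by (apply Rinv_le_contravar; lra).
      pose proof (Rabs_pos (amplitude u)). pose proof (Rabs_pos (G (psi m tau b u))).
      apply Rmult_le_compat; [nra | apply Rlt_le, Rinv_0_lt_compat; lra | nra | lra]. }
    pose proof (HQ a ltac:(lra)). pose proof (HQ c ltac:(lra)).
    assert (Hinv : / P c - / P a <= / lam).
    { apply Rinv_sub_le; [lra |].
      destruct Hsign as [Hs|Hs]; [left | right]; split; apply Hs; lra. }
    assert (Hh : h c - h a <= 1)
      by (pose proof (chi_range (c / sqrt (tau m))); pose proof (chi_range (a / sqrt (tau m)));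
          unfold h; lra).
    assert (A * ((h c - h a) / lam) <= A * / lam).
    { apply Rmult_le_compat_l; [lra |]. unfold Rdiv.
      rewrite <- (Rmult_1_l (/ lam)) at 2.
      apply Rmult_le_compat_r; [apply Rlt_le, Rinv_0_lt_compat |]; lra. }
    assert (A * (/ P c - / P a) <= A * / lam) by (apply Rmult_le_compat_l; lra).
    unfold Rdiv in *. nra.
Qed.

Section Crossing.

Variables nu u0 : R.
Hypothesis nu_range : 0 < nu <= 1 / 4.
Hypothesis u0_range : 0 <= u0 <= sqrt (tau m) / 2.
Hypothesis rate_separated : forall u, 0 <= u <= sqrt (tau m) / 2 ->
  Rmin (1 / 2) (nu * Rabs (u ^ 2 - u0 ^ 2)) <= Rabs (rate m tau b u).
Hypothesis rate_nonneg_below : forall u, 0 <= u < u0 -> 0 <= rate m tau b u.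
Hypothesis rate_nonpos_above : forall u, u0 < u <= sqrt (tau m) / 2 -> rate m tau b u <= 0.

Lemma sqrt_nu_range : 0 < sqrt nu <= 1 / 2 /\ 2 <= / sqrt nu /\ nu * (/ sqrt nu) ^ 2 = 1.
Proof.
  assert (Hs : 0 < sqrt nu) by (apply sqrt_lt_R0; lra).
  pose proof (sqrt_sqrt nu ltac:(lra)).
  assert (sqrt nu <= 1 / 2) by nra.
  split; [lra | split].
  - replace 2 with (/ (1 / 2)) by field. apply Rinv_le_contravar; lra.
  - rewrite <- H at 1. field. lra.
Qed.

Lemma sqrt_nu_le_abs_rate (u : R) : 0 <= u <= sqrt (tau m) / 2 ->
  / sqrt nu <= Rabs (u ^ 2 - u0 ^ 2) -> sqrt nu <= Rabs (rate m tau b u).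
Proof.
  intros Hu Hd. destruct sqrt_nu_range as (Hs & _ & Hnu).
  eapply Rle_trans; [| apply rate_separated, Hu]. apply Rmin_glb; [lra |].
  replace (sqrt nu) with (nu * / sqrt nu).
  - apply Rmult_le_compat_l; lra.
  - pose proof (sqrt_sqrt nu ltac:(lra)). rewrite <- H at 1. field. lra.
Qed.

Lemma inv_abs_rate_le (u : R) : 0 < u <= sqrt (tau m) / 2 -> u ^ 2 <> u0 ^ 2 ->
  / (u * Rabs (rate m tau b u)) <= 2 / u + / (nu * u * Rabs (u ^ 2 - u0 ^ 2)).
Proof.
  intros Hu Hne. set (z := Rabs (u ^ 2 - u0 ^ 2)).
  assert (Hz : 0 < z) by (apply Rabs_pos_lt; lra).
  assert (Hmin : 0 < Rmin (1 / 2) (nu * z)) by (apply Rmin_glb_lt; [| apply Rmult_lt_0_compat]; lra).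
  assert (Hrate := rate_separated u ltac:(lra)). fold z in Hrate.
  assert (/ Rabs (rate m tau b u) <= / Rmin (1 / 2) (nu * z)) by (apply Rinv_le_contravar; lra).
  assert (/ Rmin (1 / 2) (nu * z) <= 2 + / (nu * z)).
  { apply Rmin_case.
    - assert (0 < / (nu * z)) by (apply Rinv_0_lt_compat, Rmult_lt_0_compat; lra).
      replace (/ (1 / 2)) with 2 by field. lra.
    - lra. }
  rewrite Rinv_mult.
  replace (2 / u + / (nu * u * z)) with (/ u * (2 + / (nu * z))) by (field; lra).
  apply Rmult_le_compat_l; [apply Rlt_le, Rinv_0_lt_compat |]; lra.
Qed.

Lemma abs_RInt_osc_below_crossing (c2 : R) :
  / sqrt nu < c2 -> c2 <= u0 ^ 2 - / sqrt nu -> c2 <= (sqrt (tau m) / 2) ^ 2 ->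
  ex_RInt osc (sqrt (/ sqrt nu)) (sqrt c2) /\
  Rabs (RInt osc (sqrt (/ sqrt nu)) (sqrt c2)) <= a0 / sqrt (tau k) * (5 * / sqrt nu + ln c2).
Proof.
  intros Hc2r Hc2u0 Hc2L. pose proof sqrt_tau_m_bounds. pose proof a0_nonneg.
  assert (0 <= a0 / sqrt (tau k)) by (apply Rdiv_le_0_compat; lra).
  destruct sqrt_nu_range as (Hs & Hr2 & Hnu).
  set (r := / sqrt nu) in *. set (x0 := u0 ^ 2) in *.
  assert (Ha2 : sqrt r ^ 2 = r) by (apply pow2_sqrt; lra).
  assert (Hc2 : sqrt c2 ^ 2 = c2) by (apply pow2_sqrt; lra).
  assert (Hu2 : forall u, sqrt r <= u <= sqrt c2 -> r <= u ^ 2 <= c2)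
    by (intros u Hu; pose proof (sqrt_pos r); nra).
  assert (HcL : sqrt c2 <= sqrt (tau m) / 2).
  { rewrite <- (sqrt_pow2 (sqrt (tau m) / 2)) by lra. apply sqrt_le_1_alt; lra. }
  assert (Hr0 : 0 < sqrt r) by (apply sqrt_lt_R0; lra).
  assert (Hx0 : 0 < x0) by lra.
  destruct (abs_RInt_osc_nonstationary (sqrt r) (sqrt c2) (sqrt nu)
     (fun u => ln (u ^ 2) + / (2 * nu * x0) * (ln (u ^ 2) - ln (x0 - u ^ 2)))
     (fun u => 2 / u + / (nu * u * (x0 - u ^ 2)))) as [Hex Hbd].
  - exact Hr0.
  - apply sqrt_le_1_alt; lra.
  - exact HcL.
  - lra.
  - intros u Hu. specialize (Hu2 u Hu). auto_derive; [repeat split; nra |].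
    field. repeat split; nra.
  - intros u Hu. specialize (Hu2 u Hu). replace (x0 - u ^ 2) with (Rabs (u ^ 2 - u0 ^ 2))
      by (rewrite Rabs_left1; fold x0; lra).
    apply inv_abs_rate_le; [split | fold x0]; lra.
  - left. intros u Hu. specialize (Hu2 u Hu).
    assert (u ^ 2 < u0 ^ 2) by (fold x0; lra).
    assert (sqrt nu <= Rabs (rate m tau b u))
      by (apply sqrt_nu_le_abs_rate; [| rewrite Rabs_left1]; fold r x0; lra).
    assert (0 <= rate m tau b u) by (apply rate_nonneg_below; split; nra).
    rewrite Rabs_right in *; lra.
  - split; [exact Hex |]. eapply Rle_trans; [exact Hbd |].
    apply Rmult_le_compat_l; [lra |]. rewrite Ha2, Hc2.
    assert (0 <= ln r) by (rewrite <- ln_1; apply ln_le_ln; lra).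
    assert (ln c2 <= ln x0) by (apply ln_le_ln; lra).
    assert (ln r <= ln (x0 - c2)) by (apply ln_le_ln; lra).
    assert (ln (x0 - r) <= ln x0) by (apply ln_le_ln; lra).
    assert (Hln : ln x0 - ln r <= x0 / r).
    { rewrite <- ln_div by lra. pose proof (exp_ineq1_le (ln (x0 / r))) as Hexp.
      rewrite exp_ln in Hexp by (apply Rdiv_lt_0_compat; lra). lra. }
    assert (/ (2 * nu * x0) * (ln c2 - ln (x0 - c2) - (ln r - ln (x0 - r))) <= r).
    { apply Rle_trans with (/ (2 * nu * x0) * (2 * (x0 / r))).
      - apply Rmult_le_compat_l; [apply Rlt_le, Rinv_0_lt_compat, Rmult_lt_0_compat |]; lra.
      - replace (/ (2 * nu * x0) * (2 * (x0 / r))) with (/ (nu * r ^ 2) * r) by (field; lra).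
        rewrite Hnu. lra. }
    replace (4 / sqrt nu) with (4 * r) by (unfold r, Rdiv; ring). nra.
Qed.

Lemma abs_RInt_osc_above_crossing :
  u0 ^ 2 + / sqrt nu < (sqrt (tau m) / 2) ^ 2 ->
  ex_RInt osc (sqrt (u0 ^ 2 + / sqrt nu)) (sqrt (tau m) / 2) /\
  Rabs (RInt osc (sqrt (u0 ^ 2 + / sqrt nu)) (sqrt (tau m) / 2))
  <= a0 / sqrt (tau k) * (5 * / sqrt nu + ln ((sqrt (tau m) / 2) ^ 2)).
Proof.
  intros Hx0L. pose proof sqrt_tau_m_bounds. pose proof a0_nonneg.
  assert (0 <= a0 / sqrt (tau k)) by (apply Rdiv_le_0_compat; lra).
  destruct sqrt_nu_range as (Hs & Hr2 & Hnu).
  set (r := / sqrt nu) in *. set (x0 := u0 ^ 2) in *. set (L := sqrt (tau m) / 2) in *.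
  assert (HL : 0 < L) by (unfold L; lra).
  assert (Hx0 : 0 <= x0) by (unfold x0; nra).
  assert (Ha : 0 < sqrt (x0 + r)) by (apply sqrt_lt_R0; lra).
  assert (Ha2 : sqrt (x0 + r) ^ 2 = x0 + r) by (apply pow2_sqrt; lra).
  assert (HaL : sqrt (x0 + r) <= L).
  { rewrite <- (sqrt_pow2 L) by lra. apply sqrt_le_1_alt; lra. }
  assert (Hu2 : forall u, sqrt (x0 + r) <= u <= L -> x0 + r <= u ^ 2) by (intros; nra).
  destruct (abs_RInt_osc_nonstationary (sqrt (x0 + r)) L (sqrt nu)
     (fun u => ln (u ^ 2) - / (2 * nu * (u ^ 2 - x0)))
     (fun u => 2 / u + u / (nu * (u ^ 2 - x0) ^ 2))) as [Hex Hbd].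
  - exact Ha.
  - exact HaL.
  - apply Rle_refl.
  - lra.
  - intros u Hu. specialize (Hu2 u Hu). auto_derive; [repeat split; nra |].
    field. repeat split; nra.
  - intros u Hu. specialize (Hu2 u Hu).
    eapply Rle_trans; [apply inv_abs_rate_le; [unfold L in Hu; split | fold x0]; lra |].
    rewrite Rabs_right by (fold x0; lra). fold x0. apply Rplus_le_compat_l.
    replace (u / (nu * (u ^ 2 - x0) ^ 2))
      with (u ^ 2 / (u ^ 2 - x0) * / (nu * u * (u ^ 2 - x0))) by (field; repeat split; nra).
    rewrite <- (Rmult_1_l (/ (nu * u * (u ^ 2 - x0)))) at 1.
    apply Rmult_le_compat_r; [apply Rlt_le, Rinv_0_lt_compat; repeat apply Rmult_lt_0_compat; lra |].
    apply (Rmult_le_reg_r (u ^ 2 - x0)); [lra |].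
    unfold Rdiv. rewrite Rmult_assoc, Rinv_l; lra.
  - right. intros u Hu. specialize (Hu2 u Hu).
    assert (u0 ^ 2 < u ^ 2) by (fold x0; lra).
    assert (sqrt nu <= Rabs (rate m tau b u))
      by (apply sqrt_nu_le_abs_rate; [| rewrite Rabs_right]; fold r x0 L; lra).
    assert (rate m tau b u <= 0) by (apply rate_nonpos_above; split; nra).
    rewrite Rabs_left1 in *; lra.
  - split; [exact Hex |]. eapply Rle_trans; [exact Hbd |].
    apply Rmult_le_compat_l; [lra |]. rewrite Ha2. replace (x0 + r - x0) with r by ring.
    assert (0 <= ln (x0 + r)) by (rewrite <- ln_1; apply ln_le_ln; lra).
    assert (0 <= / (2 * nu * (L ^ 2 - x0)))
      by (apply Rlt_le, Rinv_0_lt_compat, Rmult_lt_0_compat; lra).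
    assert (/ (2 * nu * r) = r / 2).
    { replace (/ (2 * nu * r)) with (/ (nu * r ^ 2) * r / 2) by (field; lra). rewrite Hnu. field. }
    replace (4 / sqrt nu) with (4 * r) by (unfold r, Rdiv; ring). lra.
Qed.

Lemma RInt_osc0_eq_osc (c d : R) : 0 < c <= d -> RInt osc0 c d = RInt osc c d.
Proof.
  intros Hcd. apply RInt_ext. intros x Hx. rewrite Rmin_left, Rmax_right in Hx by lra.
  unfold osc0. destruct (Rle_dec x 0); [lra | reflexivity].
Qed.

(* Split [[0, L]] where [u^2] equals [1/sqrt nu], [u0^2 - 1/sqrt nu] and [u0^2 + 1/sqrt nu]
   (clipped to [[0, L^2]]): on the two outer long pieces [|u^2 - u0^2| >= 1/sqrt nu], and
   the two remaining pieces are short. *)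
Lemma abs_RInt_osc0_le_crossing :
  1 <= (sqrt (tau m) / 2) ^ 2 ->
  Rabs (RInt osc0 0 (sqrt (tau m) / 2))
  <= a0 / sqrt (tau k) * (13 * / sqrt nu + 2 * ln ((sqrt (tau m) / 2) ^ 2)).
Proof.
  intros HX1. pose proof sqrt_tau_m_bounds. pose proof a0_nonneg.
  set (A := a0 / sqrt (tau k)). assert (HA : 0 <= A) by (apply Rdiv_le_0_compat; lra).
  destruct sqrt_nu_range as (Hs & Hr2 & Hnu).
  set (r := / sqrt nu) in *. set (L := sqrt (tau m) / 2) in *. set (X := L ^ 2) in *.
  assert (HL : 0 < L) by (unfold L; lra).
  assert (HLT : L < sqrt (tau m)) by (unfold L; lra).
  assert (HLX : sqrt X = L) by (apply sqrt_pow2; lra).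
  set (x0 := u0 ^ 2) in *.
  assert (Hx0 : 0 <= x0 <= X) by (unfold x0, X; split; nra).
  assert (HlnX : 0 <= ln X) by (rewrite <- ln_1; apply ln_le_ln; lra).
  set (c1 := Rmin r X). set (c2 := Rmin (Rmax r (x0 - r)) X). set (c3 := Rmin (x0 + r) X).
  assert (Hc : 0 < c1 <= r /\ c1 <= c2 /\ c2 <= c3 /\ c3 <= X /\ c3 - c2 <= 2 * r
                /\ (c1 < c2 -> c1 = r /\ r < c2 /\ c2 <= x0 - r /\ c2 <= X)
                /\ (c3 < X -> c3 = x0 + r)).
  { destruct (Rmin_cases r X) as [[? E1]|[? E1]], (Rmax_cases r (x0 - r)) as [[? E2]|[? E2]],
      (Rmin_cases (Rmax r (x0 - r)) X) as [[? E3]|[? E3]], (Rmin_cases (x0 + r) X) as [[? E4]|[? E4]];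
      unfold c1, c2, c3; rewrite ?E1, ?E2, ?E3, ?E4 in *; rewrite ?E2 in *;
      repeat split; intros; lra. }
  destruct Hc as (Hc1 & Hc12 & Hc23 & Hc3X & Hc32 & Hc12' & Hc3').
  set (u1 := sqrt c1). set (u2 := sqrt c2). set (u3 := sqrt c3).
  assert (Hu1 : 0 < u1) by (apply sqrt_lt_R0; lra).
  assert (Hu12 : u1 <= u2) by (apply sqrt_le_1_alt; lra).
  assert (Hu23 : u2 <= u3) by (apply sqrt_le_1_alt; lra).
  assert (Hu3L : u3 <= L) by (rewrite <- HLX; apply sqrt_le_1_alt; lra).
  assert (Hs1 : u1 ^ 2 = c1) by (apply pow2_sqrt; lra).
  assert (Hs2 : u2 ^ 2 = c2) by (apply pow2_sqrt; lra).
  assert (Hs3 : u3 ^ 2 = c3) by (apply pow2_sqrt; lra).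
  destruct (RInt_osc0_trivial_bound 0 u1) as [E1 B1]; [lra | lra |].
  destruct (RInt_osc0_trivial_bound u1 u2) as [E2 _]; [lra | lra |].
  destruct (RInt_osc0_trivial_bound u2 u3) as [E3 B3]; [lra | lra |].
  destruct (RInt_osc0_trivial_bound u3 L) as [E4 _]; [lra | lra |].
  fold A in B1, B3.
  rewrite <- (RInt_Chasles osc0 0 u1 L), <- (RInt_Chasles osc0 u1 u2 L),
    <- (RInt_Chasles osc0 u2 u3 L); try assumption;
    try (apply (ex_RInt_Chasles osc0 _ u2); try assumption;
         apply (ex_RInt_Chasles osc0 _ u3); assumption);
    try (apply (ex_RInt_Chasles osc0 _ u3); assumption).
  change plus with Rplus.
  assert (B1' : Rabs (RInt osc0 0 u1) <= A * r).
  { eapply Rle_trans; [exact B1 |]. apply Rmult_le_compat_l; [| rewrite Hs1]; lra. }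
  assert (B3' : Rabs (RInt osc0 u2 u3) <= A * (2 * r)).
  { eapply Rle_trans; [exact B3 |]. apply Rmult_le_compat_l; [| rewrite Hs2, Hs3]; lra. }
  assert (B2 : Rabs (RInt osc0 u1 u2) <= A * (5 * r + ln X)).
  { destruct (Rlt_dec c1 c2) as [Hlt|Hge].
    - destruct (Hc12' Hlt) as (-> & Hc2r & Hc2x & Hc2X).
      destruct abs_RInt_osc_below_crossing with c2 as [_ Hb]; try (fold r x0 L X; lra).
      unfold u1, u2. rewrite RInt_osc0_eq_osc by (split; [apply sqrt_lt_R0 | apply sqrt_le_1_alt]; lra).
      eapply Rle_trans; [exact Hb |]. apply Rmult_le_compat_l; [lra |].
      assert (ln c2 <= ln X) by (apply ln_le_ln; lra). fold r. lra.
    - assert (c1 = c2) as Heq by lra. unfold u2. rewrite <- Heq. fold u1.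
      rewrite RInt_point. unfold zero; simpl. rewrite Rabs_R0. apply Rmult_le_pos; lra. }
  assert (B4 : Rabs (RInt osc0 u3 L) <= A * (5 * r + ln X)).
  { destruct (Rlt_dec c3 X) as [Hlt|Hge].
    - pose proof (Hc3' Hlt) as Hc3.
      destruct abs_RInt_osc_above_crossing as [_ Hb]; [fold r x0 L X; lra |].
      unfold u3. rewrite Hc3, RInt_osc0_eq_osc by (rewrite <- Hc3; fold u3; lra). exact Hb.
    - assert (u3 = L) as -> by (unfold u3; replace c3 with X by lra; exact HLX).
      rewrite RInt_point. unfold zero; simpl. rewrite Rabs_R0. apply Rmult_le_pos; lra. }
  pose proof (Rabs_triang (RInt osc0 0 u1) (RInt osc0 u1 u2 + (RInt osc0 u2 u3 + RInt osc0 u3 L))).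
  pose proof (Rabs_triang (RInt osc0 u1 u2) (RInt osc0 u2 u3 + RInt osc0 u3 L)).
  pose proof (Rabs_triang (RInt osc0 u2 u3) (RInt osc0 u3 L)).
  nra.
Qed.

End Crossing.

Lemma a0_div_sqrt_tau_k_mul_le : a0 / sqrt (tau k) * sqrt (tau m) <= a0.
Proof.
  pose proof sqrt_tau_m_bounds. pose proof a0_nonneg.
  unfold Rdiv. rewrite Rmult_assoc. rewrite <- (Rmult_1_r a0) at 2.
  apply Rmult_le_compat_l; [lra |].
  apply (Rmult_le_reg_l (sqrt (tau k))); [lra |].
  rewrite <- Rmult_assoc, Rinv_r, Rmult_1_l, Rmult_1_r; lra.
Qed.

Lemma abs_RInt_osc0_le_sqrt_tau_m :
  Rabs (RInt osc0 0 (sqrt (tau m) / 2)) <= a0 * sqrt (tau m) / 4.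
Proof.
  pose proof sqrt_tau_m_bounds. pose proof a0_div_sqrt_tau_k_mul_le.
  destruct (RInt_osc0_trivial_bound 0 (sqrt (tau m) / 2)) as [_ Hb]; [lra | lra |].
  eapply Rle_trans; [exact Hb |].
  replace ((sqrt (tau m) / 2) ^ 2 - 0 ^ 2) with (sqrt (tau m) * sqrt (tau m) / 4) by field.
  apply Rmult_le_reg_r with (/ sqrt (tau m)); [apply Rinv_0_lt_compat; lra |].
  replace (a0 * sqrt (tau m) / 4 * / sqrt (tau m)) with (a0 / 4) by (field; lra).
  replace (a0 / sqrt (tau k) * (sqrt (tau m) * sqrt (tau m) / 4) * / sqrt (tau m))
    with (a0 / sqrt (tau k) * sqrt (tau m) / 4) by (field; lra).
  lra.
Qed.

Lemma abs_RInt_osc0_le_scale (s : R) : 0 < s <= 1 / 2 ->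
  (forall v, 0 <= v <= sqrt (tau m) / 2 ->
     Rabs (rate m tau b v) < 1 / 2 -> 2 * s ^ 2 <= rate_decay m tau b v) ->
  16 <= tau m ->
  Rabs (RInt osc0 0 (sqrt (tau m) / 2)) <= 13 * (a0 / sqrt (tau k)) / s + 4 * a0.
Proof.
  intros Hs HD HT. pose proof sqrt_tau_m_bounds. pose proof a0_div_sqrt_tau_k_mul_le. pose proof a0_nonneg.
  destruct (rate_crossing (s ^ 2) HD) as (u0 & Hu0 & Hsep & Hbelow & Habove).
  assert (HL2 : (sqrt (tau m) / 2) ^ 2 = tau m / 4)
    by (unfold Rdiv; rewrite Rpow_mult_distr, pow2_sqrt; lra).
  eapply Rle_trans; [apply (abs_RInt_osc0_le_crossing (s ^ 2) u0); auto; nra |].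
  rewrite HL2, sqrt_pow2 by lra.
  assert (ln (tau m / 4) <= 2 * sqrt (tau m)).
  { eapply Rle_trans; [apply ln_le_ln | apply ln_le_twice_sqrt]; lra. }
  assert (0 <= ln (tau m / 4)) by (rewrite <- ln_1; apply ln_le_ln; lra).
  assert (0 <= a0 / sqrt (tau k)) by (apply Rdiv_le_0_compat; lra).
  unfold Rdiv at 2. nra.
Qed.

(* Trivial bound when [sqrt tau_m <= 4 tau_1^(1/4)]; otherwise the curvature
   [rate_decay >= 1 / (2 tau_1)] at the crossing, i.e. [s = tau_1^(-1/2) / 2]. *)
Lemma abs_RInt_osc0_le_tau1 :
  Rabs (RInt osc0 0 (sqrt (tau m) / 2)) <= 8 * a0 * Rpower (tau 1%nat) (1 / 4).
Proof.
  pose proof sqrt_tau_m_bounds. pose proof a0_div_sqrt_tau_k_mul_le. pose proof a0_nonneg.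
  pose proof abs_RInt_osc0_le_sqrt_tau_m. destruct (tau_between m ltac:(lia)) as [_ HT1].
  assert (Hq2 := Rpower_quarter_sq (tau 1%nat) ltac:(lra)).
  assert (Hq : 0 < Rpower (tau 1%nat) (1 / 4)) by apply exp_pos.
  set (q := Rpower (tau 1%nat) (1 / 4)) in *.
  assert (HTq : sqrt (tau m) <= q ^ 2) by (rewrite Hq2; apply sqrt_le_1_alt; lra).
  destruct (Rle_dec (sqrt (tau m)) (4 * q)) as [Hsmall|Hbig]; [nra |].
  assert (Hq4 : 4 < q) by nra.
  assert (HT16 : 16 <= tau m) by (pose proof (sqrt_sqrt (tau m) ltac:(lra)); nra).
  assert (HD : forall v, 0 <= v <= sqrt (tau m) / 2 -> Rabs (rate m tau b v) < 1 / 2 ->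
            2 * (/ (2 * q ^ 2)) ^ 2 <= rate_decay m tau b v).
  { intros v Hv Hr. replace (2 * (/ (2 * q ^ 2)) ^ 2) with (2 * / (4 * tau 1%nat)).
    - apply rate_decay_ge_tau1; assumption.
    - rewrite <- (sqrt_sqrt (tau 1%nat)) by lra. rewrite <- Hq2. field. lra. }
  eapply Rle_trans; [apply (abs_RInt_osc0_le_scale (/ (2 * q ^ 2))); [| exact HD | exact HT16] |].
  - split; [apply Rinv_0_lt_compat; nra |].
    replace (1 / 2) with (/ 2) by field. apply Rinv_le_contravar; nra.
  - replace (13 * (a0 / sqrt (tau k)) / / (2 * q ^ 2))
      with (26 * q * (a0 / sqrt (tau k) * q)) by (field; nra).
    assert (a0 / sqrt (tau k) * q <= a0 / 4).
    { apply Rle_trans with (a0 / sqrt (tau k) * (sqrt (tau m) / 4)); [| nra].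
      apply Rmult_le_compat_l; [apply Rdiv_le_0_compat |]; lra. }
    nra.
Qed.

(* Trivial bound when [tau_m < 16]; otherwise the curvature bound of
   [rate_decay_ge_weights], with [s = min (1/2) (1/Y)], [Y = 17 sqrt tau_k m^(3/2) max b / b_k]. *)
Lemma abs_RInt_osc0_le_weights :
  Rabs (RInt osc0 0 (sqrt (tau m) / 2))
  <= 232 * a0 * (Rpower (INR m) (3 / 2) / b k * maxb m b).
Proof.
  pose proof sqrt_tau_m_bounds. pose proof a0_div_sqrt_tau_k_mul_le. pose proof a0_nonneg.
  pose proof abs_RInt_osc0_le_sqrt_tau_m. destruct (tau_between k k_range) as [HTk _].
  assert (Hm : 1 <= INR m) by (apply (le_INR 1); lia).
  rewrite Rpower_three_halves by lra.
  assert (Hsm : 1 <= sqrt (INR m)) by (rewrite <- sqrt_1; apply sqrt_le_1_alt; lra).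
  pose proof (b_pos k k_range). pose proof (le_maxb m b k k_range).
  set (B := maxb m b) in *.
  set (M := INR m * sqrt (INR m) / b k * B).
  assert (HM : 1 <= M).
  { unfold M. replace (INR m * sqrt (INR m) / b k * B) with (INR m * sqrt (INR m) * (B / b k))
      by (field; lra).
    assert (1 <= B / b k) by (apply (Rmult_le_reg_r (b k)); [lra | unfold Rdiv; rewrite Rmult_assoc, Rinv_l; lra]).
    assert (1 <= INR m * sqrt (INR m)) by nra. nra. }
  destruct (Rlt_dec (tau m) 16) as [Hsmall|Hbig].
  { assert (sqrt (tau m) < 4) by (rewrite <- (sqrt_pow2 4) by lra; apply sqrt_lt_1_alt; lra). nra. }
  assert (HsT4 : 4 <= sqrt (tau m)) by (rewrite <- (sqrt_pow2 4) by lra; apply sqrt_le_1_alt; lra).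
  set (Y := 17 * sqrt (tau k) * (INR m * sqrt (INR m)) * B / b k).
  assert (HY : 0 < Y) by (unfold Y; apply Rdiv_lt_0_compat; [repeat apply Rmult_lt_0_compat |]; lra).
  set (s := Rmin (1 / 2) (/ Y)).
  assert (Hs : 0 < s <= 1 / 2)
    by (split; [apply Rmin_glb_lt; [lra | apply Rinv_0_lt_compat, HY] | apply Rmin_l]).
  assert (HY2 : (/ Y) ^ 2 = 144 / 289 * (b k ^ 2 / (144 * tau k * INR m ^ 3 * B ^ 2))).
  { unfold Y, Rdiv. rewrite pow_inv, !Rpow_mult_distr, pow_inv, !pow2_sqrt by lra.
    field. repeat split; lra. }
  assert (HD : forall v, 0 <= v <= sqrt (tau m) / 2 -> Rabs (rate m tau b v) < 1 / 2 ->
            2 * s ^ 2 <= rate_decay m tau b v).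
  { intros v Hv Hr. eapply Rle_trans; [| apply (rate_decay_ge_weights k v k_range Hv Hr)].
    assert (s ^ 2 <= (/ Y) ^ 2) by (apply pow_incr; split; [lra | apply Rmin_r]).
    assert (0 < b k ^ 2 / (144 * tau k * INR m ^ 3 * B ^ 2)).
    { apply Rdiv_lt_0_compat; [apply pow_lt; lra |].
      pose proof (pow_lt (INR m) 3 ltac:(lra)). pose proof (pow_lt B 2 ltac:(lra)).
      repeat apply Rmult_lt_0_compat; lra. }
    fold B. lra. }
  eapply Rle_trans; [apply (abs_RInt_osc0_le_scale s Hs HD); lra |].
  assert (Hinv : / s <= 2 + Y).
  { unfold s. apply Rmin_case; [| rewrite Rinv_inv]; lra. }
  assert (HAY : a0 / sqrt (tau k) * Y = 17 * a0 * M) by (unfold Y, M; field; lra).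
  assert (a0 / sqrt (tau k) <= a0 / 4).
  { apply Rle_trans with (a0 / sqrt (tau m)); apply Rmult_le_compat_l; try lra;
      apply Rinv_le_contravar; lra. }
  assert (0 <= a0 / sqrt (tau k)) by (apply Rdiv_le_0_compat; lra).
  unfold Rdiv at 1. nra.
Qed.

Lemma is_RInt_osc (a y : R) : 0 < a <= sqrt (tau m) / 2 -> sqrt (tau m) / 2 < y ->
  is_RInt osc a y (RInt osc0 a (sqrt (tau m) / 2)).
Proof.
  intros Ha Hy. pose proof sqrt_tau_m_bounds.
  destruct (RInt_osc0_trivial_bound a (sqrt (tau m) / 2)) as [Hex _]; [lra | lra |].
  rewrite <- (plus_zero_r (RInt osc0 a (sqrt (tau m) / 2))).
  apply (is_RInt_Chasles osc a (sqrt (tau m) / 2) y).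
  - apply (is_RInt_ext osc0); [| apply (@RInt_correct R_CompleteNormedModule), Hex].
    intros x Hx. rewrite Rmin_left, Rmax_right in Hx by lra.
    unfold osc0. destruct (Rle_dec x 0); [lra | reflexivity].
  - apply (is_RInt_ext (fun _ => 0)).
    + intros x Hx. rewrite Rmin_left, Rmax_right in Hx by lra.
      unfold osc. rewrite amplitude_eq0 by lra. now rewrite !Rmult_0_l.
    + pose proof (@is_RInt_const R_NormedModule (sqrt (tau m) / 2) y 0) as Hc.
      replace (scal _ _) with 0 in Hc by (unfold scal; simpl; unfold mult; simpl; ring).
      exact Hc.
Qed.

Lemma RInt_osc0_near_0 (a eps : R) : 0 < eps -> 0 < a ->
  a < Rmin (sqrt (tau m) / 2) (Rmin 1 (eps / (a0 / sqrt (tau k) + 1))) ->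
  Rabs (RInt osc0 a (sqrt (tau m) / 2) - RInt osc0 0 (sqrt (tau m) / 2)) < eps.
Proof.
  intros He Ha Hd. pose proof sqrt_tau_m_bounds. pose proof a0_nonneg.
  set (A := a0 / sqrt (tau k)) in *. assert (HA : 0 <= A) by (apply Rdiv_le_0_compat; lra).
  pose proof (Rmin_l (sqrt (tau m) / 2) (Rmin 1 (eps / (A + 1)))).
  pose proof (Rmin_r (sqrt (tau m) / 2) (Rmin 1 (eps / (A + 1)))).
  pose proof (Rmin_l 1 (eps / (A + 1))). pose proof (Rmin_r 1 (eps / (A + 1))).
  destruct (RInt_osc0_trivial_bound 0 a) as [E1 B1]; [lra | lra |].
  destruct (RInt_osc0_trivial_bound a (sqrt (tau m) / 2)) as [E2 _]; [lra | lra |].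
  rewrite <- (RInt_Chasles _ _ _ _ E1 E2). change plus with Rplus.
  replace (_ - _) with (- RInt osc0 0 a) by ring. rewrite Rabs_Ropp.
  fold A in B1. eapply Rle_lt_trans; [exact B1 |].
  assert (A * a < eps).
  { apply Rle_lt_trans with ((A + 1) * a); [nra |].
    apply (Rmult_lt_reg_r (/ (A + 1))); [apply Rinv_0_lt_compat; lra |].
    replace ((A + 1) * a * / (A + 1)) with a by (field; lra).
    replace (eps * / (A + 1)) with (eps / (A + 1)) by reflexivity. lra. }
  nra.
Qed.

End Oscillation.

Lemma integrand_eq (t : R) :
  integrand m k tau b chi omega t = (osc cos t, osc sin t).
Proof.
  unfold integrand, osc, amplitude, expi, scal. simpl. unfold prod_scal, scal. simpl.
  unfold mult. simpl. f_equal; unfold Rdiv; ring.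
Qed.

Lemma abs_cos_le_1 (t : R) : Rabs (cos t) <= 1.
Proof. apply Rabs_le, COS_bound. Qed.

Lemma abs_sin_le_1 (t : R) : Rabs (sin t) <= 1.
Proof. apply Rabs_le, SIN_bound. Qed.

Lemma is_RInt_gen_integrand :
  is_RInt_gen (integrand m k tau b chi omega) (at_right 0) (Rbar_locally p_infty)
    (RInt (osc0 cos) 0 (sqrt (tau m) / 2), RInt (osc0 sin) 0 (sqrt (tau m) / 2)).
Proof.
  pose proof sqrt_tau_m_bounds. pose proof a0_nonneg.
  intros P [eps HP].
  set (d := Rmin (sqrt (tau m) / 2) (Rmin 1 (eps / (a0 / sqrt (tau k) + 1)))).
  assert (Hd : 0 < d).
  { assert (0 <= a0 / sqrt (tau k)) by (apply Rdiv_le_0_compat; lra).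
    unfold d. repeat apply Rmin_glb_lt; try lra.
    apply Rdiv_lt_0_compat; [apply cond_pos | lra]. }
  apply (Filter_prod _ _ _ (fun a => 0 < a < d) (fun y => sqrt (tau m) / 2 < y)).
  - exists (mkposreal _ Hd). intros x Hx Hx0. split; [exact Hx0 |].
    change (Rabs (x - 0) < d) in Hx. rewrite Rminus_0_r, Rabs_right in Hx; lra.
  - exists (sqrt (tau m) / 2). auto.
  - intros a y Ha Hy. pose proof (Rmin_l (sqrt (tau m) / 2) (Rmin 1 (eps / (a0 / sqrt (tau k) + 1)))).
    exists (RInt (osc0 cos) a (sqrt (tau m) / 2), RInt (osc0 sin) a (sqrt (tau m) / 2)).
    split.
    + apply is_RInt_fct_extend_pair;
        [apply (is_RInt_ext (osc cos)) | apply (is_RInt_ext (osc sin))];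
        try (intros t _; rewrite integrand_eq; reflexivity);
        apply is_RInt_osc; auto using continuous_cos, continuous_sin, abs_cos_le_1, abs_sin_le_1;
        unfold d in *; lra.
    + apply HP. split; apply RInt_osc0_near_0;
        auto using continuous_cos, continuous_sin, abs_cos_le_1, abs_sin_le_1;
        solve [apply cond_pos | apply Ha].
Qed.

Lemma abs_RInt_osc0_le (g G : R -> R) :
  (forall t, is_derive G t (g t)) -> (forall t, continuous g t) ->
  (forall t, Rabs (G t) <= 1) -> (forall t, Rabs (g t) <= 1) ->
  Rabs (RInt (osc0 g) 0 (sqrt (tau m) / 2))
  <= 232 * a0 * Rmin (Rpower (tau 1%nat) (1 / 4)) (Rpower (INR m) (3 / 2) / b k * maxb m b).
Proof.
  intros. pose proof a0_nonneg.
  rewrite Rmult_min_distr_l by lra. apply Rmin_glb.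
  - eapply Rle_trans; [apply (abs_RInt_osc0_le_tau1 g G); auto |].
    pose proof (exp_pos (1 / 4 * ln (tau 1%nat))). unfold Rpower. nra.
  - apply (abs_RInt_osc0_le_weights g G); auto.
Qed.

Lemma integrand_integral_bound :
  exists I : C,
    is_RInt_gen (integrand m k tau b chi omega) (at_right 0) (Rbar_locally p_infty) I /\
    Cmod I <= 464 * a0 * Rmin (Rpower (tau 1%nat) (1 / 4)) (Rpower (INR m) (3 / 2) / b k * maxb m b).
Proof.
  eexists. split; [apply is_RInt_gen_integrand |].
  eapply Rle_trans; [apply Cmod_2Rmax |]. simpl.
  set (M := Rmin (Rpower (tau 1%nat) (1 / 4)) (Rpower (INR m) (3 / 2) / b k * maxb m b)).
  assert (Hneg_cos : forall t, is_derive (fun t => - cos t) t (sin t))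
    by (intros t; auto_derive; [exact I | ring]).
  assert (Hsin : Rabs (RInt (osc0 sin) 0 (sqrt (tau m) / 2)) <= 232 * a0 * M).
  { apply (abs_RInt_osc0_le sin (fun t => - cos t)); auto using continuous_sin, abs_sin_le_1.
    intros t. rewrite Rabs_Ropp. apply abs_cos_le_1. }
  assert (Hcos : Rabs (RInt (osc0 cos) 0 (sqrt (tau m) / 2)) <= 232 * a0 * M)
    by (apply (abs_RInt_osc0_le cos sin); auto using is_derive_sin, continuous_cos, abs_cos_le_1,
          abs_sin_le_1).
  assert (Hs2 : sqrt 2 <= 2) by (rewrite <- (sqrt_pow2 2) at 2 by lra; apply sqrt_le_1_alt; lra).
  pose proof (Rmax_lub _ _ _ Hcos Hsin). pose proof (sqrt_pos 2).
  pose proof (Rle_trans _ _ _ (Rabs_pos _) Hcos). nra.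
Qed.

End Amplitude.

End Phase.

Theorem corollary7p4 :
  forall (a0 : R) (chi : R -> R),
    (forall (n : nat) (x : R), ex_derive_n chi n x) ->
    (forall x y : R, x <= y -> chi x <= chi y) ->
    (forall l : R, l <= 1/4 -> chi l = 0) ->
    (forall l : R, 1/2 <= l -> chi l = 1) ->
  exists C0 : R,
  forall (m : nat) (tau b : nat -> R) (omega : R -> R),
    (1 <= m)%nat ->
    (forall j : nat, (1 <= j)%nat -> (j < m)%nat -> tau (S j) <= tau j) ->
    0 < tau m ->
    (forall j : nat, (1 <= j)%nat -> (j <= m)%nat -> 0 < b j) ->
    (forall u : R, 0 < u -> ex_derive omega u) ->
    (forall u : R, 0 < u -> Rabs (omega u) <= a0) ->
    (forall u : R, 0 < u -> Rabs (Derive omega u) <= a0 / u) ->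
  forall k : nat, (1 <= k)%nat -> (k <= m)%nat ->
    exists I : C,
      is_RInt_gen (integrand m k tau b chi omega)
        (at_right 0) (Rbar_locally p_infty) I /\
      Cmod I <= C0 * Rmin (Rpower (tau 1%nat) (1/4))
                          (Rpower (INR m) (3/2) / b k * maxb m b).
Proof.
  intros a0 chi Hchi Hmono Hlow Hhigh. exists (464 * a0).
  intros m tau b omega Hm Htau HT Hb Homega Hbound Hderiv k Hk1 Hkm.
  apply integrand_integral_bound; auto.
  - intros j Hj. apply Hb; lia.
  - intros x. exact (Hchi 1%nat x).
Qed.
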